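(* Let $\mathcal{P}$ be a parametrised propositional logic program over a finite alphabet $\Sigma=\Sigma_p\cup\Sigma_d$ that is positive (no negation occurs in rule bodies). Then the parametrised immediate consequence operator $\mathcal{T}_{\mathcal{P}}:L^d_p\to L^d_p$ is monotone, and for every $\Sigma$-interpretation $J$: $J\models_{wf}\mathcal{P}$ if and only if $J\models\mathrm{Th}(\mathrm{lfp}(\mathcal{T}_{\mathcal{P}}))$.
   Context: A parametrised logic program $\mathcal{P}$ is a finite set of rules $h\leftarrow l_1\wedge\dots\wedge l_n$ where $h\in\Sigma_d$ and each $l_i$ is an atom of $\Sigma$ or its negation; $\Sigma_p$ are parameter symbols, $\Sigma_d$ defined symbols. For $q\in\Sigma_d$, $\varphi_q$ is the disjunction of the bodies of all rules with head $q$ (empty disjunction $=$ false, empty body $=$ true). $L_p$: equivalence classes $\overline\varphi$ of propositional formulas over $\Sigma_p$ ordered by entailment; $L^d_p$: maps $\Sigma_d\to L_p$ ordered pointwise (symbolic interpretations). Evaluation of a formula $\varphi$ over $\Sigma$ in $\mathcal{A}\in L^d_p$: replace each $q\in\Sigma_d$ by a representative of $\mathcal{A}(q)$ and keep atoms of $\Sigma_p$, taking the equivalence class; $\mathcal{T}_{\mathcal{P}}(\mathcal{A})(q)=\varphi_q^{\mathcal{A}}$. $\mathrm{Th}(\mathcal{A})$ is the propositional theory $\bigwedge_{q\in\Sigma_d}(q\leftrightarrow\psi_q)$ with $\psi_q$ a representative of $\mathcal{A}(q)$ (unique up to equivalence). Parametrised well-founded semantics: for $I\in 2^{\Sigma_p}$,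 $T^I_{\mathcal{P}}:2^{\Sigma_d}\to 2^{\Sigma_d}$ maps $J'$ to $\{q\mid \varphi_q\text{ true in }I\cup J'\}$, and $\Psi^I_{\mathcal{P}}$ on pairs $(J_1,J_2)$ of $\Sigma_d$-interpretations is Fitting's operator: $\Psi^I_{\mathcal{P}}(J_1,J_2)_1=\{q\mid\exists$ rule with head $q$ whose body is true under Kleene three-valued evaluation in $(J_1,J_2)$ with $\Sigma_p$ fixed to $I\}$, $\Psi^I_{\mathcal{P}}(J_1,J_2)_2=\{q\mid\exists$ rule with head $q$ whose body is not false there$\}$. A partial $\Psi$-stable fixpoint is $(x,y)$ with $x=\mathrm{lfp}(\Psi(\cdot,y)_1)$, $y=\mathrm{lfp}(\Psi(x,\cdot)_2)$, and the $\Psi$-well-founded fixpoint is the least precise such pair (precision: $(x,y)\leq_p(u,v)$ iff $x\subseteq u$, $v\subseteq y$). $J\models_{wf}\mathcal{P}$ iff $(J\cap\Sigma_d,J\cap\Sigma_d)$ is the $\Psi^{J\cap\Sigma_p}_{\mathcal{P}}$-well-founded fixpoint of $T^{J\cap\Sigma_p}_{\mathcal{P}}$. $\models$ is classical propositional satisfaction. *)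

From mathcomp Require Import all_boot.
Set Implicit Arguments. Unset Strict Implicit. Unset Printing Implicit Defensive.

Inductive form (V : Type) : Type :=
| FTop | FBot | FVar of V | FNot of form V
| FAnd of form V & form V | FOr of form V & form V | FIff of form V & form V.
Arguments FTop {V}. Arguments FBot {V}.

Fixpoint feval (V : Type) (v : V -> bool) (f : form V) : bool :=
  match f with
  | FTop => true | FBot => false | FVar x => v x | FNot g => ~~ feval v g
  | FAnd g h => feval v g && feval v h
  | FOr g h => feval v g || feval v h
  | FIff g h => feval v g == feval v h
  end.

(* classical entailment / equivalence; L_p is formulas over P modulo equiv *)
Definition entails (V : Type) (f g : form V) : Prop :=
  forall v : V -> bool, feval v f -> feval v g.
Definition fequiv (V : Type) (f g : form V) : Prop := entails f g /\ entails g f.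

Fixpoint fmap (V W : Type) (s : V -> form W) (f : form V) : form W :=
  match f with
  | FTop => FTop | FBot => FBot | FVar x => s x | FNot g => FNot (fmap s g)
  | FAnd g h => FAnd (fmap s g) (fmap s h)
  | FOr g h => FOr (fmap s g) (fmap s h)
  | FIff g h => FIff (fmap s g) (fmap s h)
  end.

Section Programs.
Variables (P D : finType). (* Sigma_p = P, Sigma_d = D, Sigma = P + D *)

(* literal: (polarity, atom); polarity true = positive atom, false = negated *)
Record rule := Rule { head : D; body : seq (bool * (P + D)) }.
Definition program := seq rule.

Definition positive_program (prog : program) : bool :=
  all (fun r => all (fun l => l.1) (body r)) prog.

Definition lit_form (l : bool * (P + D)) : form (P + D) :=
  if l.1 then FVar l.2 else FNot (FVar l.2).
Definition body_form (r : rule) : form (P + D) :=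
  foldr (fun l f => FAnd (lit_form l) f) FTop (body r).
Definition phi (prog : program) (q : D) : form (P + D) :=
  foldr (fun r f => FOr (body_form r) f) FBot [seq r <- prog | head r == q].

(* symbolic interpretations L^d_p: representatives D -> form P,
   ordered pointwise by entailment *)
Definition symint := D -> form P.
Definition sle (A B : symint) : Prop := forall q, entails (A q) (B q).
Definition sequiv (A B : symint) : Prop := sle A B /\ sle B A.

Definition eval_sym (A : symint) (f : form (P + D)) : form P :=
  fmap (fun a => match a with inl p => FVar p | inr q => A q end) f.

Definition TP (prog : program) (A : symint) : symint :=
  fun q => eval_sym A (phi prog q).

Definition sym_monotone (F : symint -> symint) : Prop :=
  forall A B, sle A B -> sle (F A) (F B).

Definition is_sym_lfp (F : symint -> symint) (A : symint) : Prop :=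
  sequiv (F A) A /\ forall B, sequiv (F B) B -> sle A B.

Definition lift (f : form P) : form (P + D) := fmap (fun p => FVar (inl p)) f.

Definition Th (A : symint) : form (P + D) :=
  foldr (fun q f => FAnd (FIff (FVar (inr q)) (lift (A q))) f) FTop (enum D).

Definition param_part (J : {set P + D}) : {set P} := [set p | inl p \in J].
Definition def_part (J : {set P + D}) : {set D} := [set q | inr q \in J].

(* Kleene three-valued evaluation of a literal in (J1,J2), params fixed by I *)
Definition lit_true (I : {set P}) (J1 J2 : {set D}) (l : bool * (P + D)) : bool :=
  match l.2 with
  | inl p => (p \in I) == l.1
  | inr d => if l.1 then d \in J1 else d \notin J2
  end.
Definition lit_notfalse (I : {set P}) (J1 J2 : {set D}) (l : bool * (P + D)) : bool :=
  match l.2 with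
  | inl p => (p \in I) == l.1
  | inr d => if l.1 then d \in J2 else d \notin J1
  end.

Definition Psi1 (prog : program) (I : {set P}) (J1 J2 : {set D}) : {set D} :=
  [set q | has (fun r => (head r == q) && all (lit_true I J1 J2) (body r)) prog].
Definition Psi2 (prog : program) (I : {set P}) (J1 J2 : {set D}) : {set D} :=
  [set q | has (fun r => (head r == q) && all (lit_notfalse I J1 J2) (body r)) prog].

Definition is_set_lfp (F : {set D} -> {set D}) (x : {set D}) : Prop :=
  F x = x /\ forall z, F z = z -> x \subset z.

Definition partial_stable (prog : program) (I : {set P}) (x y : {set D}) : Prop :=
  is_set_lfp (fun z => Psi1 prog I z y) x /\ is_set_lfp (fun z => Psi2 prog I x z) y.

(* precision order: (x,y) <=_p (u,v) iff x \subset u and v \subset y *)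
Definition well_founded_fp (prog : program) (I : {set P}) (x y : {set D}) : Prop :=
  partial_stable prog I x y /\
  forall u v, partial_stable prog I u v -> (x \subset u) && (v \subset y).

Definition wf_model (prog : program) (J : {set P + D}) : Prop :=
  well_founded_fp prog (param_part J) (def_part J) (def_part J).

End Programs.

From Pilot Require Import Defs.
From mathcomp Require Import all_boot.

Set Implicit Arguments. Unset Strict Implicit. Unset Printing Implicit Defensive.

(* Fix a valuation v of the parameters.  Evaluating a symbolic interpretation
   A under v yields a set of defined atoms, and evaluating T_P(A) under v is
   the classical operator T^I_P applied to that set, with I the set of
   parameters true in v.  Hence the symbolic fixpoints of T_P are exactly the
   families (indexed by v) of fixpoints of T^I_P, and the least one is the
   family of least fixpoints; it exists because L_p can tabulate any function
   of the finitely many valuations by characteristic formulas.  For a positive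
   program both components of Fitting's operator coincide with T^I_P, so the
   only partial stable fixpoint is (lfp T^I_P, lfp T^I_P).  Thus J is a
   well-founded model iff its defined part is lfp T^I_P for I its parameter
   part, which is precisely what Th(lfp T_P) expresses. *)

Lemma feval_fmap (V W : Type) (s : V -> form W) (v : W -> bool) (f : form V) :
  feval v (fmap s f) = feval (fun x => feval v (s x)) f.
Proof. by elim: f => //= [g -> | g -> h -> | g -> h -> | g -> h ->]. Qed.

Lemma eq_has_all (T : Type) (c a b : pred T) (s : seq T) :
  all c s -> (forall x, c x -> a x = b x) -> has a s = has b s.
Proof. by move=> cs ab; elim: s cs => //= x s IH /andP [cx cs]; rewrite ab // IH. Qed.

Section SetLfp.
Variables (T : finType) (F : {set T} -> {set T}).

Lemma set_lfp_uniq x y : is_set_lfp F x -> is_set_lfp F y -> x = y.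
Proof.
move=> [Fx x_least] [Fy y_least].
by apply/eqP; rewrite eqEsubset x_least // y_least.
Qed.

Lemma eq_set_lfp G x : F =1 G -> is_set_lfp F x -> is_set_lfp G x.
Proof. by move=> FG [Fx x_least]; split=> [|z]; rewrite -FG // => /x_least. Qed.

Lemma fixset_lfp : {homo F : X Y / X \subset Y} -> is_set_lfp F (fixset F).
Proof.
move=> F_mono; split=> [|X FX]; first exact: fixsetK.
by rewrite /fixset; elim: #|T| => /= [|n IHn]; rewrite ?sub0set // -FX; apply: F_mono.
Qed.

End SetLfp.

Section Valuations.
Variables (P D : finType).

Definition val_set (v : P -> bool) : {set P} := [set p | v p].

Definition sym_set (A : symint P D) (v : P -> bool) : {set D} :=
  [set q | feval v (A q)].

Lemma sleP (A B : symint P D) :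
  sle A B <-> forall v, sym_set A v \subset sym_set B v.
Proof.
split=> [AB v | AB q v]; first by apply/subsetP => q; rewrite !inE; apply: AB.
by have /subsetP/(_ q) := AB v; rewrite !inE.
Qed.

Definition char_form (I : {set P}) : form P :=
  foldr (fun p f => FAnd (if p \in I then FVar p else FNot (FVar p)) f)
        FTop (enum P).

Lemma feval_char_form I v : feval v (char_form I) = (I == val_set v).
Proof.
have -> : feval v (char_form I) = all (fun p => (p \in I) == v p) (enum P).
  by rewrite /char_form; elim: (enum P) => //= p s ->; case: (p \in I) => /=; case: (v p).
apply/allP/eqP => [I_v | -> p _]; last by rewrite inE.
by apply/setP => p; rewrite inE; apply/eqP/I_v; rewrite mem_enum.
Qed.

Definition tabulate (g : {set P} -> {set D}) : symint P D := fun q =>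
  foldr (fun I f => FOr (if q \in g I then char_form I else FBot) f)
        FBot (enum {set P}).

Lemma sym_set_tabulate g v : sym_set (tabulate g) v = g (val_set v).
Proof.
apply/setP => q; rewrite inE.
have -> : feval v (tabulate g q) =
          has (fun I => (q \in g I) && (I == val_set v)) (enum {set P}).
  by rewrite /tabulate; elim: (enum {set P}) => //= I s ->;
     case: (q \in g I); rewrite ?feval_char_form.
apply/hasP/idP => [[I _ /andP [gI /eqP <-]] // | gv].
by exists (val_set v); rewrite ?mem_enum // gv eqxx.
Qed.

Lemma feval_Th (A : symint P D) (J : {set P + D}) :
  feval (fun a => a \in J) (Th A) =
  (def_part J == sym_set A (fun p => inl p \in J)).
Proof.
have -> : feval (fun a => a \in J) (Th A) =
    all (fun q => (inr q \in J) == feval (fun p => inl p \in J) (A q)) (enum D).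
  by rewrite /Th; elim: (enum D) => //= q s ->; rewrite /Defs.lift feval_fmap.
apply/allP/eqP => [J_A | /setP J_A q _].
  by apply/setP => q; rewrite !inE; apply/eqP/J_A; rewrite mem_enum.
by move: (J_A q); rewrite !inE => ->.
Qed.

Lemma val_set_param (J : {set P + D}) :
  val_set (fun p => inl p \in J) = param_part J.
Proof. by apply/setP => p; rewrite !inE. Qed.

End Valuations.

Section Operators.
Variables (P D : finType) (prog : program P D).

Definition tp (I : {set P}) (J : {set D}) : {set D} := Psi1 prog I J J.

Lemma Psi1_monol I (J1 K1 J2 : {set D}) :
  J1 \subset K1 -> Psi1 prog I J1 J2 \subset Psi1 prog I K1 J2.
Proof.
move=> /subsetP J1K1; apply/subsetP => q; rewrite !inE.
apply: sub_has => r /andP [-> /=]; apply: sub_all.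
by rewrite /lit_true => -[[] [p | d]] //= /J1K1.
Qed.

Lemma feval_phi w q :
  feval w (phi prog q) =
  has (fun r => (Defs.head r == q) && all (fun l => feval w (lit_form l)) (body r))
      prog.
Proof.
rewrite /phi; elim: prog => //= r s IH.
case: (Defs.head r == q) => //=; rewrite IH /body_form.
by congr (_ || _); elim: (body r) => //= l b ->.
Qed.

Lemma sym_set_TP A v : sym_set (TP prog A) v = tp (val_set v) (sym_set A v).
Proof.
apply/setP => q; rewrite /TP /eval_sym inE feval_fmap feval_phi inE.
apply: eq_has => r; congr (_ && _); apply: eq_all => l.
by rewrite /lit_form /lit_true; case: l => [[] [p | d]] /=; rewrite !inE //; case: (v p).
Qed.

Lemma sym_fixP A :
  sequiv (TP prog A) A <-> forall v, tp (val_set v) (sym_set A v) = sym_set A v.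
Proof.
split=> [[/sleP TA_A /sleP A_TA] v | fixA].
  by apply/eqP; rewrite eqEsubset -!sym_set_TP TA_A A_TA.
by split; apply/sleP => v; rewrite sym_set_TP fixA.
Qed.

Hypothesis pos : positive_program prog.

Lemma eq_positive_has (a b : pred (bool * (P + D))) (q : D) :
  (forall l : bool * (P + D), l.1 -> a l = b l) ->
  has (fun r => (Defs.head r == q) && all a (body r)) prog =
  has (fun r => (Defs.head r == q) && all b (body r)) prog.
Proof.
move=> ab; apply: eq_has_all pos _ => r pos_r; congr (_ && _).
by apply: eq_in_all => l /(allP pos_r); apply: ab.
Qed.

Lemma Psi1_positive I J1 J2 : Psi1 prog I J1 J2 = tp I J1.
Proof.
by apply/setP => q; rewrite !inE; apply: eq_positive_has => -[[] [p | d]].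
Qed.

Lemma Psi2_positive I J1 J2 : Psi2 prog I J1 J2 = tp I J2.
Proof.
by apply/setP => q; rewrite !inE; apply: eq_positive_has => -[[] [p | d]].
Qed.

Lemma tp_mono I : {homo tp I : X Y / X \subset Y}.
Proof.
by move=> X Y XY; rewrite -(Psi1_positive I Y X); apply: Psi1_monol.
Qed.

Definition lfp_tp (I : {set P}) : {set D} := fixset (tp I).

Lemma lfp_tpP I : is_set_lfp (tp I) (lfp_tp I).
Proof. exact/fixset_lfp/tp_mono. Qed.

Lemma partial_stableP I x y :
  partial_stable prog I x y <-> x = lfp_tp I /\ y = lfp_tp I.
Proof.
have Psi1E z : Psi1 prog I z y = tp I z by rewrite Psi1_positive.
have Psi2E z : Psi2 prog I x z = tp I z by rewrite Psi2_positive.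
split=> [[x_lfp y_lfp] | [x_lfp y_lfp]]; split.
- exact: set_lfp_uniq (eq_set_lfp Psi1E x_lfp) (lfp_tpP I).
- exact: set_lfp_uniq (eq_set_lfp Psi2E y_lfp) (lfp_tpP I).
- by rewrite x_lfp; apply: eq_set_lfp (lfp_tpP I) => z; rewrite Psi1E.
- by rewrite y_lfp; apply: eq_set_lfp (lfp_tpP I) => z; rewrite Psi2E.
Qed.

Lemma wf_modelP J : wf_model prog J <-> def_part J = lfp_tp (param_part J).
Proof.
rewrite /wf_model /well_founded_fp; split=> [[/partial_stableP [] //] | E].
split=> [|u v /partial_stableP [-> ->]]; first exact/partial_stableP.
by rewrite E !subxx.
Qed.

Lemma TP_monotone : sym_monotone (TP prog).
Proof.
by move=> A B /sleP AB; apply/sleP => v; rewrite !sym_set_TP tp_mono.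
Qed.

Lemma is_sym_lfp_tabulate : is_sym_lfp (TP prog) (tabulate lfp_tp).
Proof.
split=> [|B /sym_fixP fixB]; first by apply/sym_fixP => v;
  rewrite sym_set_tabulate (lfp_tpP _).1.
by apply/sleP => v; rewrite sym_set_tabulate (lfp_tpP _).2.
Qed.

Lemma sym_set_lfp A v :
  is_sym_lfp (TP prog) A -> sym_set A v = lfp_tp (val_set v).
Proof.
move=> [/sym_fixP fixA A_least]; apply/eqP.
rewrite eqEsubset (lfp_tpP _).2 ?fixA // andbT.
by have /sleP/(_ v) := A_least _ is_sym_lfp_tabulate.1; rewrite sym_set_tabulate.
Qed.

End Operators.

Theorem theorem4p8 (P D : finType) (prog : program P D) :
  positive_program prog ->
  sym_monotone (TP prog) /\
  (exists A, is_sym_lfp (TP prog) A) /\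
  (forall A, is_sym_lfp (TP prog) A ->
     forall J : {set P + D},
       wf_model prog J <-> feval (fun a => a \in J) (Th A)).
Proof.
move=> pos; split; first exact: TP_monotone.
split; first by exists (tabulate (lfp_tp prog)); apply: is_sym_lfp_tabulate.
move=> A A_lfp J.
rewrite feval_Th (sym_set_lfp pos _ A_lfp) val_set_param.
by apply: iff_trans (wf_modelP pos J) _; split=> [-> | /eqP].
Qed.
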